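(* Let $\Sigma$ be a signature, $T$ a monad on sets carrying a continuous $\Sigma$-algebra structure, and $\Gamma$ a relator for the monad $T$ that is inductive and respects $\Sigma$. Then the $\Gamma$-contextual preorder $\leq_\Gamma$ is a compatible and $\Gamma$-preadequate preorder.
   Context: An $\omega$CPPO is a poset with least element $\bot$ in which every $\omega$-chain has a lub; continuous = monotone and preserving such lubs. $T$ (unit $\eta$, bind $u\texttt{>>=}f$) carries a continuous $\Sigma$-algebra structure if each $TX$ is an $\omega$CPPO, bind is continuous in both arguments, and each $\sigma\in\Sigma$ of arity $k$ is interpreted by a continuous $\sigma^T:(TX)^k\to TX$. A relator $\Gamma$ for $T$ assigns to each $R\subseteq X\times Y$ a relation $\Gamma R\subseteq TX\times TY$ with: $=_{TX}\subseteq\Gamma(=_X)$; $\Gamma S\circ\Gamma R\subseteq\Gamma(S\circ R)$; $\Gamma((f\times g)^{-1}R)=(Tf\times Tg)^{-1}\Gamma R$ where $(f\times g)^{-1}R=\{(z,w)\mid f(z)\,R\,g(w)\}$; monotone in $R$; $x\,R\,y\Rightarrow\eta(x)\,\Gamma R\,\eta(y)$; and if $x\,R\,y\Rightarrow f(x)\,\Gamma S\,g(y)$ for all $x,y$ then $u\,\Gamma R\,v\Rightarrow(u\texttt{>>=}f)\,\Gamma S\,(v\texttt{>>=}g)$. It is inductive if for every $R$: $\bot\,\Gamma R\,v$ for all $v$, and for every $\omega$-chain $(u_n)$ and $v$, $(\forall n.\ u_n\,\Gamma R\,v)\Rightarrow\bigsqcup_n u_n\,\Gamma R\,v$. It respects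 $\Sigma$ if $u_i\,\Gamma R\,v_i$ for all $i$ implies $\sigma^T(u_1,\dots,u_k)\,\Gamma R\,\sigma^T(v_1,\dots,v_k)$. Terms and values: $M,N::=\mathsf{return}\,V\mid VW\mid(M\ \mathsf{to}\ x.N)\mid\sigma(M_1,\dots,M_{\alpha(\sigma)})$, $V,W::=x\mid\lambda x.M$, modulo $\alpha$-equivalence; $M[V/x]$ is substitution; $\mathcal{T}_0,\mathcal{V}_0$ closed terms/values; $\mathcal{T}(\bar x),\mathcal{V}(\bar x)$ those with free variables in $\bar x$. For closed $M$: $M^{(0)}=\bot$, $(\mathsf{return}\,V)^{(n+1)}=\eta(V)$, $((\lambda x.M)V)^{(n+1)}=(M[V/x])^{(n)}$, $(M\ \mathsf{to}\ x.N)^{(n+1)}=M^{(n)}\texttt{>>=}(V\mapsto(N[V/x])^{(n)})$, $(\sigma(M_1,\dots,M_k))^{(n+1)}=\sigma^T(M_1^{(n)},\dots,M_k^{(n)})$; this is an $\omega$-chain in $T\mathcal{V}_0$ and $[\![M]\!]=\bigsqcup_n M^{(n)}$. A $\lambda$-term relation is a pair $R=(R_{\mathcal{T}},R_{\mathcal{V}})$ of sets of triples $(\bar x,M,N)$ with $M,N\in\mathcal{T}(\bar x)$, resp. $(\bar x,V,W)$ with $V,W\in\mathcal{V}(\bar x)$, written $\bar x\vdash M\,R\,N$. It is compatible if: $\bar x\vdash x\,R_{\mathcal{V}}\,x$ for $x\in\bar x$; $\bar x\cup\{x\}\vdash M\,R_{\mathcal{T}}\,N$ ($x\notin\bar x$)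 implies $\bar x\vdash\lambda x.M\,R_{\mathcal{V}}\,\lambda x.N$; $\bar x\vdash V\,R_{\mathcal{V}}\,W$ implies $\bar x\vdash\mathsf{return}\,V\,R_{\mathcal{T}}\,\mathsf{return}\,W$; $\bar x\vdash V\,R_{\mathcal{V}}\,V'$ and $\bar x\vdash W\,R_{\mathcal{V}}\,W'$ imply $\bar x\vdash VW\,R_{\mathcal{T}}\,V'W'$; $\bar x\vdash M\,R_{\mathcal{T}}\,M'$ and $\bar x\cup\{x\}\vdash N\,R_{\mathcal{T}}\,N'$ ($x\notin\bar x$) imply $\bar x\vdash(M\ \mathsf{to}\ x.N)\,R_{\mathcal{T}}\,(M'\ \mathsf{to}\ x.N')$; $\bar x\vdash M_i\,R_{\mathcal{T}}\,N_i$ for all $i$ implies $\bar x\vdash\sigma(M_1,\dots,M_n)\,R_{\mathcal{T}}\,\sigma(N_1,\dots,N_n)$. Let $\mathcal{U}=\mathcal{V}_0\times\mathcal{V}_0$. For a relator $\Delta$, $R$ is $\Delta$-preadequate if for all closed $M,N$, $\emptyset\vdash M\,R_{\mathcal{T}}\,N$ implies $[\![M]\!]\,\Delta\mathcal{U}\,[\![N]\!]$. The $\Delta$-contextual preorder $\leq_\Delta$ is the (componentwise) union of all compatible $\Delta$-preadequate $\lambda$-term relations. $R$ is a preorder if for each $\bar x$ its restrictions to $\mathcal{T}(\bar x)$ and $\mathcal{V}(\bar x)$ are reflexive and transitive. *)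

From mathcomp Require Import all_boot.
From mathcomp Require Import finmap.

Set Implicit Arguments.
Unset Strict Implicit.
Unset Printing Implicit Defensive.

Local Open Scope fset_scope.

(* Syntax: fine-grain call-by-value lambda-calculus with algebraic     *)
(* operations, in locally nameless representation (free variables are *)
(* names in nat, bound variables are de Bruijn indices), so that       *)
(* alpha-equivalent terms are syntactically equal.                     *)

Inductive tm (Sig : Type) (ar : Sig -> nat) : Type :=
| tret : val ar -> tm ar
| tapp : val ar -> val ar -> tm ar
| tseq : tm ar -> tm ar -> tm ar                 (* M to x. N  (N binds index 0) *)
| top  : forall s : Sig, ('I_(ar s) -> tm ar) -> tm ar
with val (Sig : Type) (ar : Sig -> nat) : Type :=
| vbv  : nat -> val ar
| vfv  : nat -> val ar
| vlam : tm ar -> val ar.                        (* lambda x. M (M binds index 0) *)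

Arguments tret {Sig ar}.
Arguments tapp {Sig ar}.
Arguments tseq {Sig ar}.
Arguments top {Sig ar}.
Arguments vbv {Sig ar}.
Arguments vfv {Sig ar}.
Arguments vlam {Sig ar}.

Section Syntax.
Variables (Sig : Type) (ar : Sig -> nat).
Local Notation tm := (tm ar).
Local Notation val := (val ar).

Fixpoint open_tm (k : nat) (u : val) (M : tm) {struct M} : tm :=
  match M with
  | tret v => tret (open_val k u v)
  | tapp v w => tapp (open_val k u v) (open_val k u w)
  | tseq m n => tseq (open_tm k u m) (open_tm k.+1 u n)
  | top s ms => top s (fun i => open_tm k u (ms i))
  end
with open_val (k : nat) (u : val) (v : val) {struct v} : val :=
  match v with
  | vbv j => if j == k then u else vbv j
  | vfv x => vfv x
  | vlam m => vlam (open_tm k.+1 u m)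
  end.

Fixpoint close_tm (k : nat) (x : nat) (M : tm) {struct M} : tm :=
  match M with
  | tret v => tret (close_val k x v)
  | tapp v w => tapp (close_val k x v) (close_val k x w)
  | tseq m n => tseq (close_tm k x m) (close_tm k.+1 x n)
  | top s ms => top s (fun i => close_tm k x (ms i))
  end
with close_val (k : nat) (x : nat) (v : val) {struct v} : val :=
  match v with
  | vbv j => vbv j
  | vfv y => if y == x then vbv k else vfv y
  | vlam m => vlam (close_tm k.+1 x m)
  end.

Fixpoint wf_tm (xs : {fset nat}) (k : nat) (M : tm) {struct M} : bool :=
  match M with
  | tret v => wf_val xs k v
  | tapp v w => wf_val xs k v && wf_val xs k w
  | tseq m n => wf_tm xs k m && wf_tm xs k.+1 n
  | top s ms => [forall i, wf_tm xs k (ms i)]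
  end
with wf_val (xs : {fset nat}) (k : nat) (v : val) {struct v} : bool :=
  match v with
  | vbv j => j < k
  | vfv y => y \in xs
  | vlam m => wf_tm xs k.+1 m
  end.

Definition terms (xs : {fset nat}) (M : tm) : bool := wf_tm xs 0 M.
Definition values (xs : {fset nat}) (V : val) : bool := wf_val xs 0 V.

Definition lam (x : nat) (M : tm) : val := vlam (close_tm 0 x M).
Definition seqto (M : tm) (x : nat) (N : tm) : tm := tseq M (close_tm 0 x N).

Definition cval : Type := {V : val | values fset0 V}.

End Syntax.

Record monad_ops (Sig : Type) (ar : Sig -> nat) (T : Type -> Type) := MonadOps {
  eta  : forall X : Type, X -> T X;
  bind : forall X Y : Type, T X -> (X -> T Y) -> T Y;
  le   : forall X : Type, T X -> T X -> Prop;
  bot  : forall X : Type, T X;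
  sup  : forall X : Type, (nat -> T X) -> T X;
  opT  : forall (X : Type) (s : Sig), ('I_(ar s) -> T X) -> T X
}.

Arguments eta {Sig ar T} _ {X}.
Arguments bind {Sig ar T} _ {X Y}.
Arguments le {Sig ar T} _ {X}.
Arguments bot {Sig ar T} _ {X}.
Arguments sup {Sig ar T} _ {X}.
Arguments opT {Sig ar T} _ {X}.

Section Monad.
Variables (Sig : Type) (ar : Sig -> nat) (T : Type -> Type) (M : monad_ops ar T).

Definition monad_laws : Prop :=
  (forall (X Y : Type) (x : X) (f : X -> T Y), bind M (eta M x) f = f x) /\
  (forall (X : Type) (u : T X), bind M u (fun x => eta M x) = u) /\
  (forall (X Y Z : Type) (u : T X) (f : X -> T Y) (g : Y -> T Z),
      bind M (bind M u f) g = bind M u (fun x => bind M (f x) g)).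

Definition chain {X : Type} (u : nat -> T X) : Prop :=
  forall n, le M (u n) (u n.+1).

Definition omega_cppo : Prop :=
  forall X : Type,
    (forall u : T X, le M u u) /\
    (forall u v w : T X, le M u v -> le M v w -> le M u w) /\
    (forall u v : T X, le M u v -> le M v u -> u = v) /\
    (forall u : T X, le M (bot M) u) /\
    (forall u : nat -> T X, chain u ->
       (forall n, le M (u n) (sup M u)) /\
       (forall w, (forall n, le M (u n) w) -> le M (sup M u) w)).

Definition bind_continuous : Prop :=
  (forall (X Y : Type) (u u' : T X) (f : X -> T Y),
      le M u u' -> le M (bind M u f) (bind M u' f)) /\
  (forall (X Y : Type) (u : nat -> T X) (f : X -> T Y),
      chain u -> bind M (sup M u) f = sup M (fun n => bind M (u n) f)) /\
  (forall (X Y : Type) (u : T X) (f g : X -> T Y),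
      (forall x, le M (f x) (g x)) -> le M (bind M u f) (bind M u g)) /\
  (forall (X Y : Type) (u : T X) (f : nat -> X -> T Y),
      (forall x, chain (fun n => f n x)) ->
      bind M u (fun x => sup M (fun n => f n x)) = sup M (fun n => bind M u (f n))).

Definition ops_continuous : Prop :=
  (forall (X : Type) (s : Sig) (us vs : 'I_(ar s) -> T X),
      (forall i, le M (us i) (vs i)) -> le M (opT M s us) (opT M s vs)) /\
  (forall (X : Type) (s : Sig) (us : nat -> 'I_(ar s) -> T X),
      (forall i, chain (fun n => us n i)) ->
      opT M s (fun i => sup M (fun n => us n i)) = sup M (fun n => opT M s (us n))).

Definition cont_sigma_monad : Prop :=
  monad_laws /\ omega_cppo /\ bind_continuous /\ ops_continuous.

Definition fmap {X Y : Type} (f : X -> Y) (u : T X) : T Y :=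
  bind M u (fun x => eta M (f x)).

Definition relT_type : Type :=
  forall X Y : Type, (X -> Y -> Prop) -> T X -> T Y -> Prop.

Definition rcomp {X Y Z : Type} (R : X -> Y -> Prop) (S : Y -> Z -> Prop) : X -> Z -> Prop :=
  fun x z => exists y, R x y /\ S y z.       (* S o R *)

Definition relator (G : relT_type) : Prop :=
  (forall (X : Type) (u : T X), G X X (@eq X) u u) /\
  (forall (X Y Z : Type) (R : X -> Y -> Prop) (S : Y -> Z -> Prop) u v w,
      G X Y R u v -> G Y Z S v w -> G X Z (rcomp R S) u w) /\
  (forall (X Y X' Y' : Type) (f : X' -> X) (g : Y' -> Y) (R : X -> Y -> Prop) u v,
      G X' Y' (fun z w => R (f z) (g w)) u v <-> G X Y R (fmap f u) (fmap g v)) /\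
  (forall (X Y : Type) (R R' : X -> Y -> Prop) u v,
      (forall x y, R x y -> R' x y) -> G X Y R u v -> G X Y R' u v) /\
  (forall (X Y : Type) (R : X -> Y -> Prop) x y,
      R x y -> G X Y R (eta M x) (eta M y)) /\
  (forall (X Y X' Y' : Type) (R : X -> Y -> Prop) (S : X' -> Y' -> Prop)
          (f : X -> T X') (g : Y -> T Y') u v,
      (forall x y, R x y -> G X' Y' S (f x) (g y)) ->
      G X Y R u v -> G X' Y' S (bind M u f) (bind M v g)).

Definition inductive_relator (G : relT_type) : Prop :=
  forall (X Y : Type) (R : X -> Y -> Prop),
    (forall v : T Y, G X Y R (bot M) v) /\
    (forall (u : nat -> T X) (v : T Y),
        chain u -> (forall n, G X Y R (u n) v) -> G X Y R (sup M u) v).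

Definition respects_sig (G : relT_type) : Prop :=
  forall (X Y : Type) (R : X -> Y -> Prop) (s : Sig)
         (us : 'I_(ar s) -> T X) (vs : 'I_(ar s) -> T Y),
    (forall i, G X Y R (us i) (vs i)) -> G X Y R (opT M s us) (opT M s vs).

Local Notation tm := (tm ar).
Local Notation val := (val ar).
Local Notation cval := (cval ar).

(* eta(V) for a closed value V (junk value bot otherwise) *)
Definition ret_closed (v : val) : T cval :=
  match values fset0 v as b return values fset0 v = b -> T cval with
  | true => fun h => eta M (exist (fun V : val => values fset0 V) v h)
  | false => fun _ => bot M
  end erefl.

Fixpoint approx (n : nat) (P : tm) {struct n} : T cval :=
  match n with
  | 0 => bot M
  | n'.+1 =>
    match P with
    | tret v => ret_closed v
    | tapp (vlam m) w => approx n' (open_tm 0 w m)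
    | tapp _ _ => bot M
    | tseq m p => bind M (approx n' m) (fun V : cval => approx n' (open_tm 0 (sval V) p))
    | top s ms => opT M s (fun i => approx n' (ms i))
    end
  end.

Definition sem (P : tm) : T cval := sup M (fun n => approx n P).

Record lrel := LRel {
  relT : {fset nat} -> tm -> tm -> Prop;
  relV : {fset nat} -> val -> val -> Prop
}.

Definition is_lrel (R : lrel) : Prop :=
  (forall xs P Q, relT R xs P Q -> terms xs P /\ terms xs Q) /\
  (forall xs V W, relV R xs V W -> values xs V /\ values xs W).

Definition compatible (R : lrel) : Prop :=
  (forall xs x, x \in xs -> relV R xs (vfv x) (vfv x)) /\
  (forall xs x P Q, x \notin xs -> relT R (x |` xs) P Q ->
      relV R xs (lam x P) (lam x Q)) /\
  (forall xs V W, relV R xs V W -> relT R xs (tret V) (tret W)) /\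
  (forall xs V V' W W', relV R xs V V' -> relV R xs W W' ->
      relT R xs (tapp V W) (tapp V' W')) /\
  (forall xs x P P' Q Q', relT R xs P P' -> x \notin xs -> relT R (x |` xs) Q Q' ->
      relT R xs (seqto P x Q) (seqto P' x Q')) /\
  (forall xs (s : Sig) (ps qs : 'I_(ar s) -> tm),
      (forall i, relT R xs (ps i) (qs i)) -> relT R xs (top s ps) (top s qs)).

Definition Urel : cval -> cval -> Prop := fun _ _ => True.

Definition preadequate (G : relT_type) (R : lrel) : Prop :=
  forall P Q : tm, relT R fset0 P Q -> G cval cval Urel (sem P) (sem Q).

Definition ctx_preorder (G : relT_type) : lrel := {|
  relT := fun xs P Q => exists R, is_lrel R /\ compatible R /\ preadequate G R /\ relT R xs P Q;
  relV := fun xs V W => exists R, is_lrel R /\ compatible R /\ preadequate G R /\ relV R xs V W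
|}.

Definition is_preorder (R : lrel) : Prop :=
  forall xs : {fset nat},
    (forall P, terms xs P -> relT R xs P P) /\
    (forall P Q S, terms xs P -> terms xs Q -> terms xs S ->
        relT R xs P Q -> relT R xs Q S -> relT R xs P S) /\
    (forall V, values xs V -> relV R xs V V) /\
    (forall V W Z, values xs V -> values xs W -> values xs Z ->
        relV R xs V W -> relV R xs W Z -> relV R xs V Z).

End Monad.

From Pilot Require Import Defs.
From mathcomp Require Import all_boot.
From mathcomp Require Import finmap.
From Stdlib Require Import FunctionalExtensionality.

(* A compatible relation is reflexive on well-formed syntax.  Hence the
   composite R;S of two compatible preadequate relations contains both R and S,
   and it is again compatible, and preadequate because the relator is lax with
   respect to composition.  So the compatible preadequate relations form a
   directed family that contains the identity and is closed under composition;
   its union is therefore compatible (the finitely many premises of a rule always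
   lie in one member), preadequate, reflexive and transitive. *)

Set Implicit Arguments.
Unset Strict Implicit.
Unset Printing Implicit Defensive.

Local Open Scope fset_scope.

Scheme tm_mut := Induction for Defs.tm Sort Prop
with val_mut := Induction for Defs.val Sort Prop.
Combined Scheme tm_val_mut from tm_mut, val_mut.

Lemma exists_notin_fset (xs : {fset nat}) : exists x, x \notin xs.
Proof.
exists (\max_(y <- xs) y).+1; apply/negP => xs_max.
by have := @leq_bigmax_seq _ (enum_fset xs) predT id _ xs_max isT; rewrite ltnn.
Qed.

Section Syntax.
Variables (Sig : Type) (ar : Sig -> nat).
Local Notation tm := (tm ar).
Local Notation val := (Defs.val ar).

Fixpoint tm_size (M : tm) : nat :=
  match M with
  | tret v => (val_size v).+1
  | tapp v w => (val_size v + val_size w).+1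
  | tseq m n => (tm_size m + tm_size n).+1
  | top s ms => (\max_(i < ar s) tm_size (ms i)).+1
  end
with val_size (V : val) : nat :=
  match V with
  | vlam m => (tm_size m).+1
  | _ => 0
  end.

Lemma size_open x :
  (forall (M : tm) k, tm_size (open_tm k (vfv x) M) = tm_size M) /\
  (forall (V : val) k, val_size (open_val k (vfv x) V) = val_size V).
Proof.
apply: tm_val_mut => /=; try by move=> *; congruence.
- by move=> s ms IH k; congr S; apply: eq_bigr => i _; apply: IH.
- by move=> j k; case: (j == k).
Qed.

Section Binders.
Variables (xs : {fset nat}) (x : nat).

Lemma close_open_notin : x \notin xs ->
  (forall (M : tm) j k, wf_tm xs j M -> close_tm k x (open_tm k (vfv x) M) = M) /\
  (forall (V : val) j k, wf_val xs j V -> close_val k x (open_val k (vfv x) V) = V).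
Proof.
move=> xNxs; apply: tm_val_mut => /=.
- by move=> v IH j k /IH ->.
- by move=> v IHv w IHw j k /andP[/IHv -> /IHw ->].
- by move=> m IHm n IHn j k /andP[/IHm -> /IHn ->].
- move=> s ms IH j k /forallP wf_ms; congr top.
  by apply: functional_extensionality => i; apply: IH.
- by move=> i j k _; case: eqP => [->|] /=; rewrite ?eqxx.
- by move=> y j k yxs /=; case: eqP yxs => // ->; rewrite (negbTE xNxs).
- by move=> m IH j k wf_m; rewrite (IH _ _ wf_m).
Qed.

Lemma wf_open :
  (forall (M : tm) k, wf_tm xs k.+1 M -> wf_tm (x |` xs) k (open_tm k (vfv x) M)) /\
  (forall (V : val) k, wf_val xs k.+1 V -> wf_val (x |` xs) k (open_val k (vfv x) V)).
Proof.
apply: tm_val_mut => /=.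
- by move=> v IH k /IH.
- by move=> v IHv w IHw k /andP[/IHv -> /IHw ->].
- by move=> m IHm n IHn k /andP[/IHm -> /IHn ->].
- by move=> s ms IH k /forallP wf_ms; apply/forallP => i; apply: IH.
- move=> i k; case: eqP => [_ _|ik] /=; first by rewrite fset1U1.
  by rewrite ltnS leq_eqVlt => /orP[/eqP|].
- by move=> y k yxs; rewrite fset1Ur.
- by move=> m IH k /IH.
Qed.

Lemma wf_close :
  (forall (M : tm) k, wf_tm (x |` xs) k M -> wf_tm xs k.+1 (close_tm k x M)) /\
  (forall (V : val) k, wf_val (x |` xs) k V -> wf_val xs k.+1 (close_val k x V)).
Proof.
apply: tm_val_mut => /=.
- by move=> v IH k /IH.
- by move=> v IHv w IHw k /andP[/IHv -> /IHw ->].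
- by move=> m IHm n IHn k /andP[/IHm -> /IHn ->].
- by move=> s ms IH k /forallP wf_ms; apply/forallP => i; apply: IH.
- by move=> i k /ltnW.
- by move=> y k; rewrite in_fset1U; case: eqP => //= _.
- by move=> m IH k /IH.
Qed.

End Binders.

Section CompatibleRefl.
Variable R : lrel ar.
Hypothesis R_compat : compatible R.

Lemma compatible_refl :
  (forall xs M, terms xs M -> relT R xs M M) /\
  (forall xs V, values xs V -> relV R xs V V).
Proof.
case: R_compat => [Rvar [Rlam [Rret [Rapp [Rseq Rop]]]]].
(* Induction on size: opening a binder with a fresh name is not a subterm. *)
suff refl_size n :
    (forall xs M, tm_size M <= n -> terms xs M -> relT R xs M M) /\
    (forall xs V, val_size V <= n -> values xs V -> relV R xs V V).
  split=> [xs M | xs V]; [exact: (proj1 (refl_size _)) | exact: (proj2 (refl_size _))].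
elim: n => [|n [IHt IHv]].
  split=> [xs [] //| xs [] //= y _ yxs]; exact: Rvar.
have open_fresh xs (m : tm) : wf_tm xs 1 m -> exists2 x, x \notin xs &
    m = close_tm 0 x (open_tm 0 (vfv x) m) /\ terms (x |` xs) (open_tm 0 (vfv x) m).
  move=> wf_m; have [x xNxs] := exists_notin_fset xs.
  exists x => //; split; last exact: (proj1 (wf_open xs x)).
  by rewrite (proj1 (close_open_notin xNxs) _ _ _ wf_m).
split=> xs; [case=> [v | v w | m p | s ms] | case=> [j | y | m]];
  rewrite /= ?ltnS /terms /values /=.
- by move=> /IHv Vrefl /Vrefl; apply: Rret.
- move=> size_vw /andP[wf_v wf_w]; apply: Rapp; apply: IHv => //.
    exact: leq_trans (leq_addr _ _) size_vw.
  exact: leq_trans (leq_addl _ _) size_vw.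
- move=> size_mp /andP[wf_m /open_fresh[x xNxs [eq_p wf_p]]].
  rewrite eq_p; apply: Rseq => //.
    by apply: IHt => //; exact: leq_trans (leq_addr _ _) size_mp.
  by apply: IHt wf_p; rewrite (proj1 (size_open x)); exact: leq_trans (leq_addl _ _) size_mp.
- move=> size_ms /forallP wf_ms; apply: Rop => i; apply: IHt (wf_ms i).
  exact: leq_trans (leq_bigmax_cond i isT) size_ms.
- by [].
- by move=> _ yxs; apply: Rvar.
- move=> size_m /open_fresh[x xNxs [eq_m wf_m]].
  rewrite eq_m; apply: Rlam => //.
  by apply: IHt wf_m; rewrite (proj1 (size_open x)).
Qed.

End CompatibleRefl.

End Syntax.

Section LambdaTermRelations.
Variables (Sig : Type) (ar : Sig -> nat).

Definition lrel_sub (R S : lrel ar) : Prop :=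
  (forall xs P Q, relT R xs P Q -> relT S xs P Q) /\
  (forall xs V W, relV R xs V W -> relV S xs V W).

Lemma lrel_sub_trans R S U : lrel_sub R S -> lrel_sub S U -> lrel_sub R U.
Proof. by move=> [RST RSV] [SUT SUV]; split=> xs P Q PQ; [apply/SUT/RST | apply/SUV/RSV]. Qed.

Definition lrel_comp (R S : lrel ar) : lrel ar := {|
  relT := fun xs => rcomp (relT R xs) (relT S xs);
  relV := fun xs => rcomp (relV R xs) (relV S xs)
|}.

Section Composition.
Variables R S : lrel ar.

Lemma is_lrel_comp : is_lrel R -> is_lrel S -> is_lrel (lrel_comp R S).
Proof.
move=> [RT RV] [ST SV]; split=> xs P Q [B [RPB SBQ]].
  by split; [apply: (proj1 (RT _ _ _ RPB)) | apply: (proj2 (ST _ _ _ SBQ))].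
by split; [apply: (proj1 (RV _ _ _ RPB)) | apply: (proj2 (SV _ _ _ SBQ))].
Qed.

Lemma compatible_comp : compatible R -> compatible S -> compatible (lrel_comp R S).
Proof.
move=> [Rvar [Rlam [Rret [Rapp [Rseq Rop]]]]] [Svar [Slam [Sret [Sapp [Sseq Sop]]]]].
split; first by move=> xs x xxs; exists (vfv x); split; [apply: Rvar | apply: Svar].
split.
  move=> xs x P Q xNxs [B [RPB SBQ]].
  by exists (lam x B); split; [apply: Rlam | apply: Slam].
split.
  move=> xs V W [B [RVB SBW]].
  by exists (tret B); split; [apply: Rret | apply: Sret].
split.
  move=> xs V V' W W' [B [RVB SBV']] [C [RWC SCW']].
  by exists (tapp B C); split; [apply: Rapp | apply: Sapp].
split.
  move=> xs x P P' Q Q' [B [RPB SBP']] xNxs [C [RQC SCQ']].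
  by exists (seqto B x C); split; [apply: Rseq | apply: Sseq].
move=> xs s ps qs /fin_all_exists[Bs RSBs].
by exists (top s Bs); split; [apply: Rop | apply: Sop] => i; case: (RSBs i).
Qed.

Lemma lrel_sub_compl : is_lrel R -> compatible S -> lrel_sub R (lrel_comp R S).
Proof.
move=> [RT RV] /compatible_refl[ST SV].
split=> xs P Q RPQ; exists Q; split=> //; [apply: ST | apply: SV].
  exact: (proj2 (RT _ _ _ RPQ)).
exact: (proj2 (RV _ _ _ RPQ)).
Qed.

Lemma lrel_sub_compr : compatible R -> is_lrel S -> lrel_sub S (lrel_comp R S).
Proof.
move=> /compatible_refl[RT RV] [ST SV].
split=> xs P Q SPQ; exists P; split=> //; [apply: RT | apply: RV].
  exact: (proj1 (ST _ _ _ SPQ)).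
exact: (proj1 (SV _ _ _ SPQ)).
Qed.

End Composition.

Definition id_lrel : lrel ar := {|
  relT := fun xs P Q => P = Q /\ terms xs P;
  relV := fun xs V W => V = W /\ values xs V
|}.

Lemma is_lrel_id : is_lrel id_lrel.
Proof. by split=> xs P Q [<-]. Qed.

Lemma compatible_id : compatible id_lrel.
Proof.
split; first by [].
split; first by move=> xs x P Q _ [<- wf_P]; split=> //; apply: (proj1 (wf_close _ _ _)).
split; first by move=> xs V W [<-].
split; first by move=> xs V V' W W' [<- wf_V] [<- wf_W]; split=> //; apply/andP.
split.
  move=> xs x P P' Q Q' [<- wf_P] _ [<- wf_Q]; split=> //.
  by apply/andP; split=> //; apply: (proj1 (wf_close _ _ _)).
move=> xs s ps qs pqs.
have -> : qs = ps by apply: functional_extensionality => i; case: (pqs i).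
by split=> //=; apply/forallP => i; case: (pqs i).
Qed.

End LambdaTermRelations.

Section ContextualPreorder.
Variables (Sig : Type) (ar : Sig -> nat) (T : Type -> Type).
Variables (M : monad_ops ar T) (G : relT_type T).
Hypothesis G_relator : relator M G.
Local Notation ctx := (ctx_preorder M G).

Definition ctx_admissible (R : lrel ar) : Prop :=
  is_lrel R /\ compatible R /\ preadequate M G R.

Lemma preadequate_comp R S :
  preadequate M G R -> preadequate M G S -> preadequate M G (lrel_comp R S).
Proof.
case: G_relator => [_ [G_comp [_ [G_mono _]]]] R_adeq S_adeq P Q [B [RPB SBQ]].
apply: (G_mono _ _ (rcomp (@Urel _ ar) (@Urel _ ar))) => //.
exact: G_comp (R_adeq _ _ RPB) (S_adeq _ _ SBQ).
Qed.

Lemma preadequate_id : preadequate M G (id_lrel ar).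
Proof.
case: G_relator => [G_diag [_ [_ [G_mono _]]]] P Q [<- _].
by apply: (G_mono _ _ eq) => //; apply: G_diag.
Qed.

Lemma ctx_admissible_id : ctx_admissible (id_lrel ar).
Proof. by split; [apply: is_lrel_id | split; [apply: compatible_id | apply: preadequate_id]]. Qed.

Lemma ctx_admissible_comp R S :
  ctx_admissible R -> ctx_admissible S -> ctx_admissible (lrel_comp R S).
Proof.
move=> [R_lrel [R_compat R_adeq]] [S_lrel [S_compat S_adeq]].
split; first exact: is_lrel_comp.
by split; [apply: compatible_comp | apply: preadequate_comp].
Qed.

Lemma ctx_admissible_join R S : ctx_admissible R -> ctx_admissible S ->
  exists2 U, ctx_admissible U & lrel_sub R U /\ lrel_sub S U.
Proof.
move=> R_adm S_adm; exists (lrel_comp R S); first exact: ctx_admissible_comp.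
case: R_adm S_adm => [R_lrel [R_compat _]] [S_lrel [S_compat _]].
by split; [apply: lrel_sub_compl | apply: lrel_sub_compr].
Qed.

Lemma ctx_admissible_bound (I : eqType) (Rs : I -> lrel ar) (s : seq I) :
  (forall i, ctx_admissible (Rs i)) ->
  exists2 U, ctx_admissible U & forall i, i \in s -> lrel_sub (Rs i) U.
Proof.
move=> Rs_adm; elim: s => [|j s [U U_adm RsU]].
  by exists (id_lrel ar); [exact: ctx_admissible_id |].
have [V V_adm [RjV UV]] := ctx_admissible_join (Rs_adm j) U_adm.
exists V => // i; rewrite inE => /predU1P[-> //|i_s].
exact: lrel_sub_trans (RsU i i_s) UV.
Qed.

Lemma ctx_preorderTP xs P Q :
  relT ctx xs P Q <-> exists2 R, ctx_admissible R & relT R xs P Q.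
Proof.
by split=> [[R [? [? [? ?]]]] | [R [? [? ?]] ?]]; exists R.
Qed.

Lemma ctx_preorderVP xs V W :
  relV ctx xs V W <-> exists2 R, ctx_admissible R & relV R xs V W.
Proof.
by split=> [[R [? [? [? ?]]]] | [R [? [? ?]] ?]]; exists R.
Qed.

Lemma ctx_preorder_greatest R : ctx_admissible R -> lrel_sub R ctx.
Proof.
by move=> R_adm; split=> xs P Q RPQ; [apply/ctx_preorderTP | apply/ctx_preorderVP]; exists R.
Qed.

Lemma is_lrel_ctx_preorder : is_lrel ctx.
Proof.
split=> xs P Q; [move/ctx_preorderTP | move/ctx_preorderVP].
  by case=> R [[R_terms _] _] /R_terms.
by case=> R [[_ R_values] _] /R_values.
Qed.

Lemma preadequate_ctx_preorder : preadequate M G ctx.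
Proof. by move=> P Q /ctx_preorderTP[R [_ [_ R_adeq]] /R_adeq]. Qed.

Lemma compatible_ctx_preorder : compatible ctx.
Proof.
split.
  move=> xs x xxs; apply/ctx_preorderVP.
  by exists (id_lrel ar); [exact: ctx_admissible_id | split].
split.
  move=> xs x P Q xNxs /ctx_preorderTP[R R_adm RPQ]; apply/ctx_preorderVP; exists R => //.
  by case: R_adm => _ [[_ [R_lam _]] _]; apply: R_lam.
split.
  move=> xs V W /ctx_preorderVP[R R_adm RVW]; apply/ctx_preorderTP; exists R => //.
  by case: R_adm => _ [[_ [_ [R_ret _]]] _]; apply: R_ret.
split.
  move=> xs V V' W W' /ctx_preorderVP[R R_adm RVV'] /ctx_preorderVP[S S_adm SWW'].
  have [U U_adm [[_ RU] [_ SU]]] := ctx_admissible_join R_adm S_adm.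
  apply/ctx_preorderTP; exists U => //.
  by case: U_adm => _ [[_ [_ [_ [U_app _]]]] _]; apply: U_app; [apply: RU | apply: SU].
split.
  move=> xs x P P' Q Q' /ctx_preorderTP[R R_adm RPP'] xNxs /ctx_preorderTP[S S_adm SQQ'].
  have [U U_adm [[RU _] [SU _]]] := ctx_admissible_join R_adm S_adm.
  apply/ctx_preorderTP; exists U => //.
  by case: U_adm => _ [[_ [_ [_ [_ [U_seq _]]]]] _]; apply: U_seq; [apply: RU | | apply: SU].
move=> xs s ps qs pq_ctx.
have /fin_all_exists2[Rs Rs_adm Rs_pq] i :
  exists2 R, ctx_admissible R & relT R xs (ps i) (qs i) by apply/ctx_preorderTP.
have [U U_adm RsU] := ctx_admissible_bound (enum 'I_(ar s)) Rs_adm.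
apply/ctx_preorderTP; exists U => //.
case: U_adm => _ [[_ [_ [_ [_ [_ U_op]]]]] _]; apply: U_op => i.
by case: (RsU i (mem_enum _ i)) => RsUT _; apply: RsUT.
Qed.

Lemma is_preorder_ctx_preorder : is_preorder ctx.
Proof.
have [id_ctxT id_ctxV] := ctx_preorder_greatest ctx_admissible_id.
move=> xs; split; first by move=> P wf_P; apply: id_ctxT.
split.
  move=> P Q S _ _ _ /ctx_preorderTP[R R_adm RPQ] /ctx_preorderTP[U U_adm UQS].
  have [compT _] := ctx_preorder_greatest (ctx_admissible_comp R_adm U_adm).
  by apply: compT; exists Q.
split; first by move=> V wf_V; apply: id_ctxV.
move=> V W Z _ _ _ /ctx_preorderVP[R R_adm RVW] /ctx_preorderVP[U U_adm UWZ].
have [_ compV] := ctx_preorder_greatest (ctx_admissible_comp R_adm U_adm).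
by apply: compV; exists W.
Qed.

End ContextualPreorder.

Theorem mainTheorem7 (Sig : Type) (ar : Sig -> nat) (T : Type -> Type)
    (M : monad_ops ar T) (G : relT_type T) :
  cont_sigma_monad M ->
  relator M G -> inductive_relator M G -> respects_sig M G ->
  is_lrel (ctx_preorder M G) /\ compatible (ctx_preorder M G) /\
  preadequate M G (ctx_preorder M G) /\ is_preorder (ctx_preorder M G).
Proof.
move=> _ G_relator _ _.
split; first exact: is_lrel_ctx_preorder.
split; first exact: compatible_ctx_preorder.
split; first exact: preadequate_ctx_preorder.
exact: is_preorder_ctx_preorder.
Qed.
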